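(* Let $n\ge1$. (1) The action of $N_{\Delta_n}\times N_{\Delta_n^*}\subset\mathbb{T}^{n+1}\times\mathbb{T}^{n+1}$ on $P$ is free and preserves $\tilde\omega_1,\tilde\omega_2,\tilde g,\tilde\omega_D$, and $\mu_1,\mu_2$ are invariant under it. (2) For $k_1<0$ and $k_2\in\mathbb{R}$, the set $\mu_1^{-1}(k_1)\cap\mu_2^{-1}(k_2)\subset P$ is nonempty if and only if $\frac{-k_1}{\pi}e^{\frac{4\pi}{n+1}k_2}\ge n+1$. (3) If $\frac{-k_1}{\pi}e^{\frac{4\pi}{n+1}k_2}> n+1$, then $d\mu_1\wedge d\mu_2\neq0$ at every point of $\mu_1^{-1}(k_1)\cap\mu_2^{-1}(k_2)$.
   Context: Write $\mathbb{T}^k=\mathbb{R}^k/\mathbb{Z}^k$. Let $u_i=e_i$ ($1\le i\le n$), $u_{n+1}=-(1,\dots,1)$, $v_i=(n+1)e_i-(1,\dots,1)$ ($1\le i\le n$), $v_{n+1}=-(1,\dots,1)$ in $\mathbb{R}^n$. Let $f_{\Delta_n},f_{\Delta_n^*}:\mathbb{T}^{n+1}\to\mathbb{T}^n$ be the homomorphisms induced by $x\mapsto\sum_ix_iu_i$ and $x\mapsto\sum_ix_iv_i$ respectively, $N_{\Delta_n}=\ker f_{\Delta_n}$, $N_{\Delta_n^*}=\ker f_{\Delta_n^*}$. Let $P=(\mathbb{C}^* )^{n+1}\times_\mu(\mathbb{C}^* )^{n+1}$, identified via global coordinates $(\theta,r,\eta)\in\mathbb{T}^{n+1}\times(\mathbb{R}_{>0})^{n+1}\times\mathbb{T}^{n+1}$.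 On $P$ let $\tilde\omega_1=2\pi\sum_j r_j\,dr_j\wedge d\theta_j$, $\tilde\omega_2=\frac1{2\pi}\sum_j\frac1{r_j}dr_j\wedge d\eta_j$, $\tilde g=\sum_j\big(dr_j^2+4\pi^2r_j^2d\theta_j^2+\frac{1}{4\pi^2r_j^2}d\eta_j^2\big)$, $\tilde\omega_D=\sum_jd\theta_j\wedge d\eta_j$. The group $\mathbb{T}^{n+1}\times\mathbb{T}^{n+1}$ acts on $P$ by translation of $\theta$ and of $\eta$ respectively. Define $\mu_1,\mu_2:P\to\mathbb{R}$ by $\mu_1=-\pi\sum_{j}r_j^2$ and $\mu_2=-\frac1{2\pi}\log\big(\prod_j r_j\big)$. *)

From HB Require Import structures.
From mathcomp Require Import all_boot all_order all_algebra.
From mathcomp Require Import all_classical all_reals all_analysis.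
Set Implicit Arguments. Unset Strict Implicit. Unset Printing Implicit Defensive.
Import Order.TTheory GRing.Theory Num.Theory.
Import numFieldNormedType.Exports.
Local Open Scope ring_scope.

(* Global coordinates on P = T^{n+1} x (R_{>0})^{n+1} x T^{n+1}, lifted to the
   universal cover: a point is a 3 x (n+1) real matrix whose row 0 is theta
   (mod Z), row 1 is r (> 0), row 2 is eta (mod Z).  Tangent vectors at a point
   are also 3 x (n+1) matrices (components dtheta, dr, deta). *)
Definition Pcoord (R : realType) (n : nat) := 'M[R]_(3, n.+1).

Definition th_ {R : realType} {n : nat} (p : Pcoord R n) (j : 'I_n.+1) : R := p ord0 j.
Definition r_ {R : realType} {n : nat} (p : Pcoord R n) (j : 'I_n.+1) : R := p (inord 1) j.
Definition et_ {R : realType} {n : nat} (p : Pcoord R n) (j : 'I_n.+1) : R := p (inord 2) j.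

Definition inP {R : realType} {n : nat} (p : Pcoord R n) : Prop :=
  forall j, 0 < r_ p j.

Definition is_intR {R : realType} (x : R) : Prop := exists z : int, x = z%:~R.

Definition torus_eq {R : realType} {k : nat} (x y : 'I_k -> R) : Prop :=
  forall j, is_intR (x j - y j).

Definition P_eq {R : realType} {n : nat} (p q : Pcoord R n) : Prop :=
  torus_eq (th_ p) (th_ q) /\ (forall j, r_ p j = r_ q j) /\ torus_eq (et_ p) (et_ q).

(* the vectors u_j and v_j in R^n, for j = 0..n (u_{n+1}, v_{n+1} of the paper
   is index j = n here); coordinate i < n *)
Definition u_vec {R : realType} (n : nat) (j : 'I_n.+1) (i : 'I_n) : R :=
  ((val j == val i)%:R) - ((val j == n)%:R).
Definition v_vec {R : realType} (n : nat) (j : 'I_n.+1) (i : 'I_n) : R :=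
  n.+1%:R * ((val j == val i)%:R) - 1.

(* kernel of the homomorphism T^{n+1} -> T^n induced by x |-> sum_j x_j w_j *)
Definition in_kernel {R : realType} {n : nat} (w : 'I_n.+1 -> 'I_n -> R)
  (x : 'I_n.+1 -> R) : Prop :=
  forall i : 'I_n, is_intR (\sum_j x j * w j i).

Definition N_Delta {R : realType} (n : nat) (x : 'I_n.+1 -> R) : Prop :=
  in_kernel (@u_vec R n) x.
Definition N_Delta_star {R : realType} (n : nat) (x : 'I_n.+1 -> R) : Prop :=
  in_kernel (@v_vec R n) x.
Arguments N_Delta {R} n x.
Arguments N_Delta_star {R} n x.

Definition act {R : realType} {n : nat} (a b : 'I_n.+1 -> R) (p : Pcoord R n)
  : Pcoord R n :=
  p + \matrix_(i < 3, j < n.+1)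
        (if val i == 0%N then a j else if val i == 2%N then b j else 0).

(* covariant 2-tensors (2-forms, metrics) on P, in coordinates *)
Definition tensor2 (R : realType) (n : nat) := Pcoord R n -> Pcoord R n -> Pcoord R n -> R.

Definition pullback {R : realType} {n : nat} (F : Pcoord R n -> Pcoord R n)
  (T : tensor2 R n) : tensor2 R n :=
  fun p v w => T (F p) (derive F p v) (derive F p w).

Definition preserves {R : realType} {n : nat} (F : Pcoord R n -> Pcoord R n)
  (T : tensor2 R n) : Prop :=
  forall p, inP p -> forall v w, pullback F T p v w = T p v w.

Definition wedge {R : realType} (xv yv xw yw : R) : R := xv * yw - xw * yv.

Definition omega1 {R : realType} {n : nat} : tensor2 R n := fun p v w =>
  2 * pi * \sum_j r_ p j * wedge (r_ v j) (th_ v j) (r_ w j) (th_ w j).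

Definition omega2 {R : realType} {n : nat} : tensor2 R n := fun p v w =>
  (2 * pi)^-1 * \sum_j (r_ p j)^-1 * wedge (r_ v j) (et_ v j) (r_ w j) (et_ w j).

Definition gmetric {R : realType} {n : nat} : tensor2 R n := fun p v w =>
  \sum_j (r_ v j * r_ w j + 4 * pi ^+ 2 * (r_ p j) ^+ 2 * (th_ v j * th_ w j)
          + (4 * pi ^+ 2 * (r_ p j) ^+ 2)^-1 * (et_ v j * et_ w j)).

Definition omegaD {R : realType} {n : nat} : tensor2 R n := fun p v w =>
  \sum_j wedge (th_ v j) (et_ v j) (th_ w j) (et_ w j).

Definition mu1 {R : realType} {n : nat} (p : Pcoord R n) : R :=
  - pi * \sum_j (r_ p j) ^+ 2.

Definition mu2 {R : realType} {n : nat} (p : Pcoord R n) : R :=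
  - (2 * pi)^-1 * ln (\prod_j r_ p j).

Definition dwedge {R : realType} {n : nat} (f g : Pcoord R n -> R) : tensor2 R n :=
  fun p v w => wedge (derive f p v) (derive g p v) (derive f p w) (derive g p w).

From HB Require Import structures.
From mathcomp Require Import all_boot all_order all_algebra.
From mathcomp Require Import all_classical all_reals all_analysis.
From mathcomp Require Import ring lra.
Set Implicit Arguments. Unset Strict Implicit. Unset Printing Implicit Defensive.
Import Order.TTheory GRing.Theory Num.Theory.
Import numFieldNormedType.Exports.
Local Open Scope ring_scope.

(* The torus acts by translating the angles theta and eta, so it fixes the
   radii r and its differential is the identity; all the tensors and both
   moment maps depend on the base point only through r.
   On a common level set, sum_j r_j^2 = -k1/pi and prod_j r_j = exp(-2 pi k2),
   so the AM-GM inequality for the r_j^2 is exactly the inequality of (2),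
   with equality iff all radii coincide.  Conversely, fixing all but two radii
   to c, the remaining two must solve x^2 + y^2 = T, x y = c^2, which is
   possible iff T >= 2 c^2.  Off the equality case two radii r_i != r_j
   differ, and the minor of (d mu1, d mu2) on the radial directions of r_i and
   r_j is (r_i^2 - r_j^2) / (r_i r_j) != 0. *)

Section Action.
Variables (R : realType) (n : nat) (a b : 'I_n.+1 -> R).

Lemma r_act p : r_ (act a b p) = r_ p.
Proof.
apply/funext => j; rewrite /r_ /act !mxE.
have -> : val (inord 1 : 'I_3) = 1%N by rewrite /= inordK.
by rewrite addr0.
Qed.

Lemma th_act p j : th_ (act a b p) j = th_ p j + a j.
Proof. by rewrite /th_ /act !mxE. Qed.

Lemma et_act p j : et_ (act a b p) j = et_ p j + b j.
Proof.
rewrite /et_ /act !mxE.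
by have -> : val (inord 2 : 'I_3) = 2%N by rewrite /= inordK.
Qed.

Lemma derive_act p v : derive (act a b) p v = v.
Proof.
have -> : act a b = id + cst (act a b 0) by apply/funext => q; rewrite /act add0r.
by rewrite deriveD ?derive_id ?derive_cst ?addr0 //; exact: derivable_id.
Qed.

Lemma act_inP p : inP p -> inP (act a b p).
Proof. by move=> hp j; rewrite r_act. Qed.

Lemma act_free p :
  P_eq (act a b p) p -> torus_eq a (fun=> 0) /\ torus_eq b (fun=> 0).
Proof.
by case=> hth [_ het]; split=> j; [move: (hth j) | move: (het j)];
  rewrite ?th_act ?et_act addrAC subrr add0r subr0.
Qed.

Lemma mu1_act p : mu1 (act a b p) = mu1 p.
Proof. by rewrite /mu1 r_act. Qed.

Lemma mu2_act p : mu2 (act a b p) = mu2 p.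
Proof. by rewrite /mu2 r_act. Qed.

Lemma act_preserves (T : tensor2 R n) :
  (forall p q, r_ p = r_ q -> T p = T q) -> preserves (act a b) T.
Proof. by move=> hT p _ v w; rewrite /pullback !derive_act (hT _ p) ?r_act. Qed.

End Action.

Lemma leif_AGM_prod1 (R : realFieldType) (k : nat) (E : 'I_k.+1 -> R) :
  (forall i, 0 <= E i) -> \prod_i E i = 1 ->
  k.+1%:R <= \sum_i E i ?= iff [forall i, forall j, E i == E j].
Proof.
move=> E_ge0 prodE1.
have := leif_AGM (A := predT) (fun i _ => E_ge0 i).
rewrite cardT size_enum_ord prodE1.
set mu := _ / _; have mu_ge0 : 0 <= mu by rewrite divr_ge0 ?sumr_ge0.
have -> : \sum_i E i = k.+1%:R * mu by rewrite /mu mulrC divfK ?pnatr_eq0.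
case=> le1mu eq1mu; split.
  by rewrite -{1}[k.+1%:R]mulr1 ler_pM2l ?ltr0Sn // -(expr_ge1 (ltn0Sn k) mu_ge0).
rewrite -eq1mu [1 == _]eq_sym pexpr_eq1 // -[X in X == _]mulr1 eq_sym.
by rewrite (inj_eq (mulfI _)) ?pnatr_eq0.
Qed.

Lemma exists_pos_sumsqr_mul (R : rcfType) (T c : R) : 0 < c -> 2 * c <= T ->
  exists x y : R, [/\ 0 < x, 0 < y, x ^+ 2 + y ^+ 2 = T & x * y = c].
Proof.
move=> c_gt0 hT.
have [A A_ge0 A2] : exists2 A, 0 <= A & A ^+ 2 = T + 2 * c.
  by exists (Num.sqrt (T + 2 * c)); rewrite ?sqrtr_ge0 ?sqr_sqrtr //; lra.
have [B B_ge0 B2] : exists2 B, 0 <= B & B ^+ 2 = T - 2 * c.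
  by exists (Num.sqrt (T - 2 * c)); rewrite ?sqrtr_ge0 ?sqr_sqrtr //; lra.
have BltA : B < A by rewrite -(ltr_pXn2r (ltn0Sn 1)) ?nnegrE ?B2 ?A2 //; lra.
(* the sum and difference of the sought x and y have squares T +- 2c *)
exists ((A + B) / 2), ((A - B) / 2); split; [lra | lra | |].
- have -> : ((A + B) / 2) ^+ 2 + ((A - B) / 2) ^+ 2 = (A ^+ 2 + B ^+ 2) / 2.
    by field.
  by rewrite A2 B2; field.
- have -> : (A + B) / 2 * ((A - B) / 2) = (A ^+ 2 - B ^+ 2) / 4 by field.
  by rewrite A2 B2; field.
Qed.

Definition point_of_radii (R : realType) (n : nat) (r : 'I_n.+1 -> R) : Pcoord R n :=
  \matrix_(i < 3, j < n.+1) r j.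

Lemma r_point_of_radii (R : realType) (n : nat) (r : 'I_n.+1 -> R) :
  r_ (point_of_radii r) = r.
Proof. by apply/funext => j; rewrite /r_ mxE. Qed.

Lemma exists_radii (R : realType) (m : nat) (S c : R) :
  0 < c -> m.+2%:R * c ^+ 2 <= S ->
  exists r : 'I_m.+2 -> R,
    [/\ forall j, 0 < r j, \sum_j r j ^+ 2 = S & \prod_j r j = c ^+ m.+2].
Proof.
move=> c_gt0 hS.
have hT : 2 * c ^+ 2 <= S - m%:R * c ^+ 2.
  by rewrite lerBrDr -mulrDl -natrD addnC addn2.
have [x [y [x_gt0 y_gt0 sumxy mulxy]]] :=
  exists_pos_sumsqr_mul (exprn_gt0 2 c_gt0) hT.
pose r (j : 'I_m.+2) := if val j == 0%N then x else if val j == 1%N then y else c.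
exists r; split.
- by move=> j; rewrite /r; case: ifP => // _; case: ifP.
- rewrite !big_ord_recl /= [X in _ + (_ + X)](eq_bigr (fun=> c ^+ 2)) //.
  by rewrite sumr_const card_ord addrA sumxy -[c ^+ 2 *+ m]mulr_natl subrK.
- rewrite !big_ord_recl /= [X in _ * (_ * X)](eq_bigr (fun=> c)) //.
  by rewrite prodr_const card_ord mulrA mulxy -exprD.
Qed.

Lemma pi_neq0 (R : realType) : (pi : R) != 0.
Proof. by rewrite gt_eqF // pi_gt0. Qed.

Section LevelSets.
Variables (R : realType) (n : nat).
Implicit Types p : Pcoord R n.

Lemma sum_sqr_mu1 p : - mu1 p / pi = \sum_j r_ p j ^+ 2.
Proof. by rewrite /mu1 -mulNr opprK mulrC mulKf // pi_neq0. Qed.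

Lemma prod_r_gt0 p : inP p -> 0 < \prod_j r_ p j.
Proof. by move=> hp; apply: prodr_gt0 => j _; apply: hp. Qed.

Lemma expR_mu2 p : inP p ->
  expR (4 * pi / n.+1%:R * mu2 p) ^+ n.+1 * (\prod_j r_ p j) ^+ 2 = 1.
Proof.
move=> /prod_r_gt0 Q_gt0; rewrite -expRM_natl.
have -> : n.+1%:R * (4 * pi / n.+1%:R * mu2 p) = - (2%:R * ln (\prod_j r_ p j)).
  (* [pi] is abstracted, otherwise [field] unfolds its definition *)
  rewrite /mu2; move: (pi_neq0 R); generalize (pi : R) => q q_neq0.
  by field; rewrite q_neq0 nat1r pnatr_eq0.
by rewrite expRN expRM_natl lnK ?posrE // mulVf // expf_neq0 // gt_eqF.
Qed.

Lemma leif_AGM_radii p : inP p ->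
  n.+1%:R <= (\sum_j r_ p j ^+ 2) * expR (4 * pi / n.+1%:R * mu2 p)
          ?= iff [forall i, forall j, r_ p i == r_ p j].
Proof.
move=> hp; set x := expR _.
have x_gt0 : 0 < x by apply: expR_gt0.
have eq_scaled i j : (r_ p i ^+ 2 * x == r_ p j ^+ 2 * x) = (r_ p i == r_ p j).
  by rewrite (inj_eq (mulIf (lt0r_neq0 x_gt0))) eqrXn2 // ltW.
rewrite -(eq_forallb (fun i => eq_forallb (eq_scaled i))) mulr_suml.
apply: leif_AGM_prod1 => [j|]; first by rewrite mulr_ge0 ?sqr_ge0 ?ltW.
by rewrite big_split /= prodr_const card_ord prodrXl mulrC expR_mu2.
Qed.

Lemma level_set_nonempty_le k1 k2 :
  (exists p, inP p /\ mu1 p = k1 /\ mu2 p = k2) ->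
  n.+1%:R <= (- k1 / pi) * expR (4 * pi / n.+1%:R * k2).
Proof.
by case=> p [hp [<- <-]]; rewrite sum_sqr_mu1; case: (leif_AGM_radii hp).
Qed.

End LevelSets.

Lemma level_set_nonempty_ge (R : realType) (m : nat) (k1 k2 : R) :
  m.+2%:R <= (- k1 / pi) * expR (4 * pi / m.+2%:R * k2) ->
  exists p : Pcoord R m.+1, inP p /\ mu1 p = k1 /\ mu2 p = k2.
Proof.
move=> hk.
have m2_neq0 : (m.+2%:R : R) != 0 by rewrite pnatr_eq0.
(* c ^+ m.+2 = expR (- 2 pi k2) is the product of the radii forced by mu2 = k2 *)
pose c := expR (- (2 * pi * k2) / m.+2%:R).
have c_gt0 : 0 < c by apply: expR_gt0.
have c2E : c ^+ 2 = (expR (4 * pi / m.+2%:R * k2))^-1.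
  rewrite -expRM_natl -expRN; congr expR.
  by move: m2_neq0; generalize (m.+2%:R : R) (pi : R) => N q N_neq0; field.
have hS : m.+2%:R * c ^+ 2 <= - k1 / pi by rewrite c2E ler_pdivrMr ?expR_gt0.
have [r [r_gt0 sumr prodr]] := exists_radii c_gt0 hS.
exists (point_of_radii r); rewrite /inP /mu1 /mu2 r_point_of_radii.
split=> //; split.
  by rewrite sumr; move: (pi_neq0 R); generalize (pi : R) => q q_neq0; field.
rewrite prodr lnXn // expRK -mulr_natl.
move: (pi_neq0 R); generalize (pi : R) => q q_neq0.
by field; rewrite q_neq0 andbT -natrD pnatr_eq0.
Qed.

Lemma derive_line (R : realType) (V : normedModType R) (f : V -> R) (p v : V) :
  'D_v f p = derive1 (fun t => f (t *: v + p)) 0.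
Proof.
rewrite /derive /derive1.
suff -> : (fun h : R => h^-1 *: ((f \o shift p) (h *: v) - f p)) =
  (fun h => h^-1 *: (f ((h + 0) *: v + p) - f (0 *: v + p))) by [].
by apply/funext => h /=; rewrite addr0 scale0r add0r.
Qed.

Section RadialDerivatives.
Variables (R : realType) (n : nat).
Implicit Types p : Pcoord R n.

Definition radial (k : 'I_n.+1) : Pcoord R n := delta_mx (inord 1) k.

Lemma r_radial_line p k (t : R) j :
  r_ (t *: radial k + p) j = t * (j == k)%:R + r_ p j.
Proof. by rewrite /r_ /radial !mxE eqxx /= eq_sym. Qed.

Lemma mu1_radial_line p k :
  (fun t => mu1 (t *: radial k + p)) =
  fun t => - pi * ((t + r_ p k) ^+ 2 + \sum_(j | j != k) r_ p j ^+ 2).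
Proof.
apply/funext => t; rewrite /mu1 (bigD1 k) //= r_radial_line eqxx mulr1.
congr (_ * (_ + _)); apply: eq_bigr => j /negbTE j_neq_k.
by rewrite r_radial_line j_neq_k mulr0 add0r.
Qed.

Lemma mu2_radial_line p k :
  (fun t => mu2 (t *: radial k + p)) =
  fun t => - (2 * pi)^-1 * ln ((t + r_ p k) * \prod_(j | j != k) r_ p j).
Proof.
apply/funext => t; rewrite /mu2 (bigD1 k) //= r_radial_line eqxx mulr1.
congr (_ * ln (_ * _)); apply: eq_bigr => j /negbTE j_neq_k.
by rewrite r_radial_line j_neq_k mulr0 add0r.
Qed.

Lemma derive_mu1_radial p k : 'D_(radial k) mu1 p = - pi * (2 * r_ p k).
Proof.
rewrite derive_line mu1_radial_line derive1E; apply: derive_val.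
by apply: is_derive_eq; rewrite /GRing.scale /= add0r addr0; ring.
Qed.

Lemma derive_mu2_radial p k : inP p ->
  'D_(radial k) mu2 p = - (2 * pi)^-1 / r_ p k.
Proof.
move=> hp; rewrite derive_line mu2_radial_line derive1E; apply: derive_val.
set Q := \prod_(j | j != k) r_ p j.
have Q_gt0 : 0 < Q by apply: prodr_gt0 => j _; apply: hp.
have r_gt0 := hp k.
have ln_derive : is_derive ((0 + r_ p k) * Q) (1 : R) (@ln R) ((0 + r_ p k) * Q)^-1.
  by apply: is_derive1_ln; rewrite add0r mulr_gt0.
have lin_derive : is_derive (0 : R) (1 : R) (fun t => (t + r_ p k) * Q) Q.
  by apply: is_derive_eq; rewrite scaler0 add0r addr0 /GRing.scale /= mulr1.
have ln_comp := @is_derive1_comp R (@ln R) _ 0 _ _ ln_derive lin_derive.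
apply: is_derive_eq; rewrite /GRing.scale /= add0r; congr (_ * _).
by rewrite invfM mulfVK // gt_eqF.
Qed.
Lemma dwedge_mu_radial p i j : inP p ->
  dwedge mu1 mu2 p (radial i) (radial j) =
  (r_ p i ^+ 2 - r_ p j ^+ 2) / (r_ p i * r_ p j).
Proof.
move=> hp; rewrite /dwedge /wedge !derive_mu1_radial !derive_mu2_radial //.
have ri_neq0 := lt0r_neq0 (hp i); have rj_neq0 := lt0r_neq0 (hp j).
by move: (pi_neq0 R); generalize (pi : R) => q q_neq0; field; rewrite q_neq0 ri_neq0 rj_neq0.
Qed.

Lemma dwedge_mu_neq0 p : inP p ->
  n.+1%:R < (\sum_j r_ p j ^+ 2) * expR (4 * pi / n.+1%:R * mu2 p) ->
  exists v w : Pcoord R n, dwedge mu1 mu2 p v w != 0.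
Proof.
move=> hp; rewrite (lt_leif (leif_AGM_radii hp)).
move=> /forallPn[i /forallPn[j ri_neq_rj]].
exists (radial i), (radial j); rewrite dwedge_mu_radial //.
have ri_gt0 := hp i; have rj_gt0 := hp j.
apply: mulf_neq0; last by rewrite invr_neq0 // mulf_neq0 // lt0r_neq0.
by rewrite subr_eq0 eqrXn2 ?ltW.
Qed.

End RadialDerivatives.

Theorem mainTheorem5 (R : realType) (n : nat) (hn : (1 <= n)%N) :
  (* (1) *)
  ((forall a b : 'I_n.+1 -> R, N_Delta n a -> N_Delta_star n b ->
      (forall p : Pcoord R n, inP p -> P_eq (act a b p) p ->
         torus_eq a (fun _ => 0) /\ torus_eq b (fun _ => 0))
      /\ (forall p : Pcoord R n, inP p -> inP (act a b p))
      /\ preserves (act a b) omega1 /\ preserves (act a b) omega2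
      /\ preserves (act a b) gmetric /\ preserves (act a b) omegaD
      /\ (forall p : Pcoord R n, mu1 (act a b p) = mu1 p)
      /\ (forall p : Pcoord R n, mu2 (act a b p) = mu2 p))
  (* (2) *)
  /\ (forall k1 k2 : R, k1 < 0 ->
        ((exists p : Pcoord R n, inP p /\ mu1 p = k1 /\ mu2 p = k2) <->
         n.+1%:R <= (- k1 / pi) * expR ((4 * pi / n.+1%:R) * k2)))
  (* (3) *)
  /\ (forall k1 k2 : R, k1 < 0 ->
        n.+1%:R < (- k1 / pi) * expR ((4 * pi / n.+1%:R) * k2) ->
        forall p : Pcoord R n, inP p -> mu1 p = k1 -> mu2 p = k2 ->
        exists v w : Pcoord R n, dwedge mu1 mu2 p v w != 0)).
Proof.
split; [|split].
- move=> a b _ _.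
  split; first by move=> p _; apply: act_free.
  split; first exact: act_inP.
  split; first by apply: act_preserves => p q e; rewrite /omega1 e.
  split; first by apply: act_preserves => p q e; rewrite /omega2 e.
  split; first by apply: act_preserves => p q e; rewrite /gmetric e.
  split; first exact: act_preserves.
  by split; [exact: mu1_act | exact: mu2_act].
- move=> k1 k2 _; split; first exact: level_set_nonempty_le.
  by case: n hn => // m _; apply: level_set_nonempty_ge.
- move=> k1 k2 _ hk p hp h1 h2.
  by apply: dwedge_mu_neq0 => //; rewrite -sum_sqr_mu1 h1 h2.
Qed.
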